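(* Let $G$ be a finite simple graph of order $n$ having no connected component of order less than $3$, and let $\mathcal{G}$ be an arbitrary Abelian group of order at least $\Delta(G)+\mathrm{col}(G)+1$. Then there exists a labeling $f\colon E(G)\to\mathcal{G}$ with $f(e)\neq 0$ for all edges $e$, $w_f(v)\neq 0$ for all vertices $v$, and $w_f(u)\neq w_f(v)$ for every edge $uv$.
   Context: $w_f(v)=\sum_{u\in N(v)}f(uv)$ (sum in $\mathcal{G}$, identity $0$). $\Delta(G)$ is the maximum degree; the coloring number $\mathrm{col}(G)$ is the least $k$ such that every subgraph of $G$ has minimum degree less than $k$. *)

From mathcomp Require Import all_boot all_order all_algebra.
Set Implicit Arguments. Unset Strict Implicit. Unset Printing Implicit Defensive.
Import GRing.Theory.

Definition simple_graph (T : finType) (e : rel T) : Prop :=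
  symmetric e /\ irreflexive e.

Definition deg (T : finType) (e : rel T) (v : T) : nat := #|[set u | e v u]|.

Definition max_deg (T : finType) (e : rel T) : nat := \max_(v : T) deg e v.

(* A (not necessarily induced) subgraph H = (S, F) of G: a vertex set S and a
   symmetric set F of ordered pairs (both orientations of each edge of H),
   every pair of which is an edge of G with both ends in S. *)
Definition is_subgraph (T : finType) (e : rel T) (S : {set T}) (F : {set T * T}) : bool :=
  [forall p : T * T, (p \in F) ==>
     [&& p.1 \in S, p.2 \in S, e p.1 p.2 & ((p.2, p.1) \in F)]].

Definition sub_deg (T : finType) (F : {set T * T}) (v : T) : nat :=
  #|[set u | (v, u) \in F]|.

Definition col_bound (T : finType) (e : rel T) (k : nat) : Prop :=
  forall (S : {set T}) (F : {set T * T}),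
    S != set0 -> is_subgraph e S F -> exists2 v, v \in S & sub_deg F v < k.

Definition is_coloring_number (T : finType) (e : rel T) (k : nat) : Prop :=
  col_bound e k /\ forall j, col_bound e j -> k <= j.

Definition components_at_least3 (T : finType) (e : rel T) : Prop :=
  forall v : T, 3 <= #|[set u | connect e v u]|.

Definition wsum (T : finType) (M : zmodType) (e : rel T) (f : T -> T -> M) (v : T) : M :=
  (\sum_(u | e v u) f v u)%R.

Definition order_at_least (M : Type) (k : nat) : Prop :=
  exists g : 'I_k -> M, injective g.

(* Root every connected component at a vertex of degree less than [col] and
   take a breadth-first spanning forest.  Give every non-forest edge a fixed
   nonzero label, then label the forest edges one at a time by decreasing
   distance to the roots: the edge from a vertex to its parent is labelled once
   all its children are done.  Labelling [uv] by [x] adds [x] to the weights of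
   [u] and [v]; [x] avoids 0 and the values that would give a newly saturated
   vertex (all incident edges labelled) weight 0 or the weight of a saturated
   neighbour, or give equal weights to the ends of an unlabelled edge whose
   other incident edges are all labelled, since those could never be separated
   later.  The parent edge of a non-root [z] forbids at most [deg z + 2] values,
   which is at most [Delta + col] because roots have neighbours, so [col >= 2];
   the last edge [za] at a root [a] saturates both ends and forbids at most
   [1 + deg z + deg a <= Delta + col] values.  Components of order at least 3
   make the invariant hold before the first step. *)

From mathcomp Require Import all_boot all_order all_algebra.
From mathcomp Require Import zify.
Set Implicit Arguments. Unset Strict Implicit. Unset Printing Implicit Defensive.
Import GRing.Theory.

Lemma fresh_of_order (M : eqType) k (s : seq M) :
  order_at_least M k -> size s < k -> exists x, x \notin s.
Proof.
move=> [g g_inj] lt_s_k; have [i /= gi_s | all_in] := pickP [pred i | g i \notin s].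
  by exists (g i).
suff: k <= size s by rewrite leqNgt lt_s_k.
rewrite -[k in k <= _]size_enum_ord -(size_map g); apply: uniq_leq_size.
  by rewrite map_inj_uniq ?enum_uniq.
by move=> _ /mapP [i _ ->]; apply: contraFT (all_in i) => /= ->.
Qed.

Local Open Scope ring_scope.

Section Labelling.
Variables (T : finType) (e : rel T) (M : zmodType).
Hypotheses (e_sym : symmetric e) (e_irr : irreflexive e).
Implicit Types (f g : T -> T -> M) (X : seq T) (x : M).

Definition saturated_off f u X := [forall y, e u y ==> (y \in X) || (f u y != 0)].

(* The second clause also constrains an unlabelled edge [uv] whose other
   incident edges are all labelled: labelling [uv] adds the same value to both
   weights. *)
Definition admissible f :=
  (forall v, saturated_off f v [::] -> wsum e f v != 0) /\
  (forall u v, e u v -> saturated_off f u [:: v] -> saturated_off f v [:: u] ->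
     wsum e f u != wsum e f v).

Definition set_edge f u v x : T -> T -> M :=
  fun a b => if ((a == u) && (b == v)) || ((a == v) && (b == u)) then x else f a b.

Lemma adj_neq u v : e u v -> u != v.
Proof. by apply: contraTneq => ->; rewrite e_irr. Qed.

Lemma set_edgeC f u v x : set_edge f u v x =2 set_edge f v u x.
Proof. by move=> a b; rewrite /set_edge orbC. Qed.

Lemma set_edge_sym f u v x :
  (forall a b, f a b = f b a) -> forall a b, set_edge f u v x a b = set_edge f u v x b a.
Proof.
move=> f_sym a b; rewrite /set_edge f_sym.
by case: (a == u); case: (a == v); case: (b == u); case: (b == v).
Qed.

Lemma set_edge_id f u v x w y : w != u -> w != v -> set_edge f u v x w y = f w y.
Proof. by move=> wu wv; rewrite /set_edge (negbTE wu) (negbTE wv). Qed.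

Lemma eq_wsum f g v : f =2 g -> wsum e f v = wsum e g v.
Proof. by move=> fg; apply: eq_bigr => y _; rewrite fg. Qed.

Lemma eq_saturated_off f g u X : f =2 g -> saturated_off f u X = saturated_off g u X.
Proof. by move=> fg; apply: eq_forallb => y; rewrite fg. Qed.

Lemma saturated_off_dup f u y : saturated_off f u [:: y; y] = saturated_off f u [:: y].
Proof. by apply: eq_forallb => z; rewrite !inE orbb. Qed.

Lemma wsum_set_edge_id f u v x w :
  w != u -> w != v -> wsum e (set_edge f u v x) w = wsum e f w.
Proof. by move=> wu wv; apply: eq_bigr => y _; rewrite set_edge_id. Qed.

Lemma saturated_off_set_edge_id f u v x w X :
  w != u -> w != v -> saturated_off (set_edge f u v x) w X = saturated_off f w X.
Proof. by move=> wu wv; apply: eq_forallb => y; rewrite set_edge_id. Qed.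

Lemma wsum_set_edge f u v x :
  e u v -> f u v = 0 -> wsum e (set_edge f u v x) u = wsum e f u + x.
Proof.
move=> euv fuv; rewrite /wsum (bigD1 v) // [in RHS](bigD1 v) //= fuv add0r addrC.
congr (_ + _); last by rewrite /set_edge !eqxx.
apply: eq_bigr => y /andP [_ yv].
by rewrite /set_edge eqxx (negbTE yv) (negbTE (adj_neq euv)).
Qed.

Lemma saturated_off_set_edge f u v x X : e u v -> x != 0 ->
  saturated_off (set_edge f u v x) u X = saturated_off f u (v :: X).
Proof.
move=> euv x0; apply: eq_forallb => y; rewrite /set_edge inE eqxx (negbTE (adj_neq euv)) /=.
by case: (y == v); rewrite /= ?x0 ?orbT.
Qed.

(* [forbidden f u v] lists the labels of [uv] that would break [admissible]
   at [u]; the [critical] vertices are the neighbours that could tie with [u]. *)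
Definition critical f u v : pred T :=
  [pred t | [&& e u t, t != v, saturated_off f u [:: v; t] & saturated_off f t [:: u]]].

Definition forbidden f u v : seq M :=
  (if saturated_off f u [:: v] then [:: - wsum e f u] else [::]) ++
  [seq wsum e f t - wsum e f u | t <- enum (critical f u v)].

Definition cost f u v : nat := if saturated_off f u [:: v] then deg e u else 1%N.

Lemma cost_le_deg f u v : e u v -> (cost f u v <= deg e u)%N.
Proof.
by move=> euv; rewrite /cost; case: ifP => // _; apply/card_gt0P; exists v; rewrite inE.
Qed.

(* When [u] has a second unlabelled edge [u t0], the only critical vertex is [t0]. *)
Lemma size_forbidden f u v : e u v -> (size (forbidden f u v) <= cost f u v)%N.
Proof.
move=> euv; rewrite /forbidden /cost size_cat size_map -cardE.
case: ifP => [_ | /negbT /forallPn [t0]].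
  rewrite /deg (cardsD1 v) inE euv leq_add2l; apply: subset_leq_card.
  by apply/subsetP => t /and4P [eut tv _ _]; rewrite !inE eut tv.
rewrite negb_imply negb_or !inE => /and3P [eut0 t0v /negPn /eqP ft0].
rewrite add0n -(cards1 t0); apply: subset_leq_card; apply/subsetP => t /and4P [_ _ /forallP sat _].
move: (sat t0); rewrite eut0 ft0 eqxx !inE (negbTE t0v) orbF /=.
by rewrite eq_sym => ->.
Qed.

Lemma forbiddenP f u v x : x \notin forbidden f u v ->
  (saturated_off f u [:: v] -> wsum e f u + x != 0) /\
  (forall t, critical f u v t -> wsum e f u + x != wsum e f t).
Proof.
rewrite mem_cat negb_or => /andP [x_sat x_crit]; split.
  by move=> sat; move: x_sat; rewrite sat inE addrC addr_eq0.
move=> t crit_t; apply: contra x_crit => /eqP wt; apply/mapP; exists t.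
  by rewrite mem_enum.
by rewrite -wt addrAC subrr add0r.
Qed.

Lemma set_edge_separates f u v x t :
  admissible f -> e u v -> f u v = 0 -> f v u = 0 -> x != 0 -> x \notin forbidden f u v ->
  e u t -> saturated_off (set_edge f u v x) u [:: t] ->
  saturated_off (set_edge f u v x) t [:: u] ->
  wsum e (set_edge f u v x) u != wsum e (set_edge f u v x) t.
Proof.
move=> [_ adm_sep] euv fuv fvu x0 x_forb eut.
rewrite saturated_off_set_edge // wsum_set_edge //.
have [-> | tv] := eqVneq t v.
  have evu : e v u by rewrite e_sym.
  rewrite (eq_saturated_off _ _ (set_edgeC f u v x)) (eq_wsum _ (set_edgeC f u v x)).
  rewrite saturated_off_set_edge // wsum_set_edge // (inj_eq (addIr x)).
  by rewrite !saturated_off_dup; exact: adm_sep.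
have tu : t != u by rewrite eq_sym adj_neq.
rewrite saturated_off_set_edge_id // wsum_set_edge_id // => sat_u sat_t.
by apply: (forbiddenP x_forb).2; rewrite /critical /= eut tv sat_u sat_t.
Qed.

Lemma admissible_set_edge k f u v :
  order_at_least M k -> admissible f -> e u v -> f u v = 0 -> f v u = 0 ->
  (1 + cost f u v + cost f v u < k)%N ->
  exists2 x, x != 0 & admissible (set_edge f u v x).
Proof.
move=> ordM adm euv fuv fvu lt_k; have evu : e v u by rewrite e_sym.
have [x] : exists x, x \notin 0 :: forbidden f u v ++ forbidden f v u.
  apply: fresh_of_order ordM _; rewrite /= size_cat.
  have := size_forbidden f euv; have := size_forbidden f evu; lia.
rewrite inE mem_cat !negb_or => /and3P [x0 x_forb_u x_forb_v]; exists x => //.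
have fE := set_edgeC f u v x.
have sep_u t := @set_edge_separates f u v x t adm euv fuv fvu x0 x_forb_u.
have sep_v t : e v t -> saturated_off (set_edge f u v x) v [:: t] ->
    saturated_off (set_edge f u v x) t [:: v] ->
    wsum e (set_edge f u v x) v != wsum e (set_edge f u v x) t.
  by rewrite !(eq_saturated_off _ _ fE) !(eq_wsum _ fE); exact: set_edge_separates.
split=> [w | s t].
  have [-> | wu] := eqVneq w u.
    rewrite saturated_off_set_edge // wsum_set_edge //; exact: (forbiddenP x_forb_u).1.
  have [-> | wv] := eqVneq w v.
    rewrite (eq_saturated_off _ _ fE) (eq_wsum _ fE) saturated_off_set_edge //.
    rewrite wsum_set_edge //; exact: (forbiddenP x_forb_v).1.
  rewrite saturated_off_set_edge_id // wsum_set_edge_id //; exact: adm.1.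
have [-> | su] := eqVneq s u; first exact: sep_u.
have [-> | sv] := eqVneq s v; first exact: sep_v.
have [-> | tu] := eqVneq t u.
  by rewrite e_sym => eus ? ?; rewrite eq_sym; apply: sep_u.
have [-> | tv] := eqVneq t v.
  by rewrite e_sym => evs ? ?; rewrite eq_sym; apply: sep_v.
rewrite !saturated_off_set_edge_id // !wsum_set_edge_id //; exact: adm.2.
Qed.

End Labelling.

Section Components.
Variables (T : finType) (e : rel T).
Hypothesis e_sym : symmetric e.

Lemma card_component_le (K : {set T}) v :
  v \in K -> (forall x y, e x y -> x \in K -> y \in K) ->
  (#|[set u | connect e v u]| <= #|K|)%N.
Proof.
move=> vK K_closed; apply: subset_leq_card; apply/subsetP => u.
by rewrite inE => /(closed_connect (intro_closed (sym_connect_sym e_sym) K_closed)) <-.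
Qed.

Lemma exists_neighbour v : components_at_least3 e -> exists y, e v y.
Proof.
move=> comp3; have [y evy | no_adj] := pickP (e v); first by exists y.
have: (#|[set u | connect e v u]| <= #|[set v]|)%N.
  apply: (card_component_le (K := [set v])) => [|x y exy]; rewrite ?set11 // inE.
  by move=> /eqP xv; rewrite xv no_adj in exy.
by rewrite cards1; have := comp3 v; lia.
Qed.

Lemma exists_other_neighbour u v : components_at_least3 e -> e u v ->
  (forall y, e u y -> y = v) -> exists2 y, e v y & y != u.
Proof.
move=> comp3 euv u_leaf.
have [y /andP [evy yu] | v_leaf] := pickP [pred y | e v y && (y != u)]; first by exists y.
have: (#|[set w | connect e u w]| <= #|[set u; v]|)%N.
  apply: (card_component_le (K := [set u; v])) => [|x y]; first by rewrite !inE eqxx.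
  rewrite !inE => exy /orP [] /eqP xE; rewrite xE in exy.
    by rewrite (u_leaf _ exy) eqxx orbT.
  by move: (v_leaf y); rewrite /= exy => /negbFE ->.
by rewrite cards2; have := comp3 u; lia.
Qed.

End Components.

Section Construction.
Variables (T : finType) (e : rel T) (col : nat).
Hypotheses (e_sym : symmetric e) (e_irr : irreflexive e).
Hypotheses (comp3 : components_at_least3 e) (colb : col_bound e col).
Implicit Types (a u v w y z : T) (P : {set T}).

Lemma exists_low_degree z : exists a, connect e z a && (deg e a < col)%N.
Proof.
pose S := [set y | connect e z y].
pose F := [set q : T * T | e q.1 q.2 && (q.1 \in S)].
have S_neq0 : S != set0 by apply/set0Pn; exists z; rewrite inE connect0.
have F_sub : is_subgraph e S F.
  apply/forallP => [[a b]]; apply/implyP; rewrite !inE /= => /andP [eab za].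
  have zb : connect e z b := connect_trans za (connect1 eab).
  by rewrite za zb eab e_sym eab.
have [a] := colb S_neq0 F_sub; rewrite inE => za lt_col; exists a; rewrite za.
suff -> : deg e a = sub_deg F a by [].
by apply: eq_card => y; rewrite !inE /= za andbT.
Qed.

Definition root_of z := odflt z [pick a | connect e z a && (deg e a < col)%N].

Lemma root_of_spec z : connect e z (root_of z) && (deg e (root_of z) < col)%N.
Proof.
rewrite /root_of; case: pickP => [a // | none].
by have [a] := exists_low_degree z; rewrite none.
Qed.

Lemma root_of_connect z z' : connect e z z' -> root_of z = root_of z'.
Proof.
move=> zz'; have same := same_connect (sym_connect_sym e_sym) zz'.
rewrite /root_of (eq_pick (_ : _ =1 [pred a | connect e z' a && (deg e a < col)%N])).
  case: pickP => // none; have [a a_ok] := exists_low_degree z'.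
  by move: (none a); rewrite /= a_ok.
by move=> a /=; rewrite same.
Qed.

Definition forest_roots := [set a | root_of a == a].

Lemma root_of_in_forest_roots z : root_of z \in forest_roots.
Proof. by have /andP [zc _] := root_of_spec z; rewrite inE -(root_of_connect zc). Qed.

Lemma forest_roots_deg a : a \in forest_roots -> (deg e a < col)%N.
Proof. by rewrite inE => /eqP ca; have := root_of_spec a; rewrite ca => /andP []. Qed.

Lemma forest_roots_connect a a' :
  a \in forest_roots -> a' \in forest_roots -> connect e a a' -> a = a'.
Proof. by rewrite !inE => /eqP ca /eqP ca' aa'; rewrite -ca -ca' (root_of_connect aa'). Qed.

Definition reaches_root z n :=
  [exists p : n.-tuple T, path e z p && (last z p \in forest_roots)].

Lemma exists_reaches_root z : exists n, reaches_root z n.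
Proof.
have /andP [/connectP [p zp last_p] _] := root_of_spec z; exists (size p).
by apply/existsP; exists (in_tuple p); rewrite /= zp -last_p root_of_in_forest_roots.
Qed.

Definition dist z := ex_minn (exists_reaches_root z).

Lemma dist_min z n : reaches_root z n -> (dist z <= n)%N.
Proof. by rewrite /dist; case: ex_minnP => m _; apply. Qed.

Lemma dist_reaches z : reaches_root z (dist z).
Proof. by rewrite /dist; case: ex_minnP. Qed.

Lemma dist_eq0 z : (dist z == 0%N) = (z \in forest_roots).
Proof.
apply/idP/idP => [/eqP d0 | zR].
  by have := dist_reaches z; rewrite d0 => /existsP [p]; rewrite tuple0.
by rewrite -leqn0; apply: dist_min; apply/existsP; exists [tuple]; rewrite /= zR.
Qed.

Lemma dist_adj u v : e u v -> (dist v <= (dist u).+1)%N.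
Proof.
move=> euv; apply: dist_min; have /existsP [p /andP [up last_p]] := dist_reaches u.
by apply/existsP; exists [tuple of u :: p]; rewrite /= e_sym euv up.
Qed.

Lemma exists_closer z : z \notin forest_roots -> exists y, e z y && (dist y < dist z)%N.
Proof.
rewrite -dist_eq0; have := dist_reaches z; case: (dist z) => [|n] //.
move=> /existsP [[[|y p] size_p]] //= /andP [/andP [ezy yp] last_p] _.
exists y; rewrite ezy ltnS; apply: dist_min; apply/existsP.
by exists (Tuple (size_p : size p == n)); rewrite /= yp.
Qed.

Definition parent z := odflt z [pick y | e z y && (dist y < dist z)%N].

Lemma parent_spec z : z \notin forest_roots -> e z (parent z) && (dist (parent z) < dist z)%N.
Proof.
move=> zR; have [y y_ok] := exists_closer zR.
by rewrite /parent; case: pickP => [// | none]; rewrite none in y_ok.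
Qed.

Definition child w z := (w \notin forest_roots) && (parent w == z).

Lemma child_adj w z : child w z -> e w z.
Proof. by case/andP => wR /eqP <-; case/andP: (parent_spec wR). Qed.

Lemma child_dist w z : child w z -> (dist z < dist w)%N.
Proof. by case/andP => wR /eqP <-; case/andP: (parent_spec wR). Qed.

Lemma root_child a w : a \in forest_roots -> e a w -> child w a /\ dist w = 1%N.
Proof.
move=> aR eaw; have wR : w \notin forest_roots.
  apply/negP => wR; have aw := forest_roots_connect aR wR (connect1 eaw).
  by rewrite aw e_irr in eaw.
have /andP [ewp dp] := parent_spec wR.
have da : dist a = 0%N by apply/eqP; rewrite dist_eq0.
have dw : dist w = 1%N.
  by have := dist_adj eaw; move: wR; rewrite -dist_eq0 da; case: (dist w) => [|[]].
move: dp; rewrite dw ltnS leqn0 dist_eq0 => pR; split=> //; rewrite /child wR eq_sym.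
by apply/eqP/(forest_roots_connect aR pR); apply: connect_trans (connect1 eaw) (connect1 ewp).
Qed.

Lemma child_of_leaf_root a z y : a \in forest_roots -> e a z -> (forall y, e a y -> y = z) ->
  e z y -> y != a -> child y z.
Proof.
move=> aR eaz a_leaf ezy ya; have [_ dz] := root_child aR eaz.
have ay : connect e a y := connect_trans (connect1 eaz) (connect1 ezy).
have yR : y \notin forest_roots.
  by apply: contra ya => yR; rewrite (forest_roots_connect aR yR ay).
have /andP [eyq dq] := parent_spec yR; rewrite /child yR /=.
have aq : connect e a (parent y) := connect_trans ay (connect1 eyq).
have [qR | qR] := boolP (parent y \in forest_roots).
  rewrite -(forest_roots_connect aR qR aq) e_sym in eyq.
  by move: ezy; rewrite (a_leaf _ eyq) e_irr.
have /andP [eqr dr] := parent_spec qR.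
have dq1 : dist (parent y) = 1%N.
  have := dist_adj ezy; have : dist (parent y) != 0%N by rewrite dist_eq0.
  by rewrite dz; lia.
move: dr; rewrite dq1 ltnS leqn0 dist_eq0 => rR.
have ar : connect e a (parent (parent y)) := connect_trans aq (connect1 eqr).
by rewrite -(forest_roots_connect aR rR ar) e_sym in eqr; rewrite (a_leaf _ eqr).
Qed.

Definition tree_edge u v := child u v || child v u.

Lemma tree_edge_adj u v : tree_edge u v -> e u v.
Proof. by case/orP => /child_adj //; rewrite e_sym. Qed.

Lemma exists_tree_edge w : exists y, tree_edge w y.
Proof.
have [wR | wR] := boolP (w \in forest_roots).
  have [y ewy] := exists_neighbour e_sym w comp3.
  by exists y; rewrite /tree_edge (root_child wR ewy).1 orbT.
by exists (parent w); rewrite /tree_edge /child wR eqxx.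
Qed.

Lemma tree_edge_beside_root a z : a \in forest_roots -> e a z ->
  exists y, ((y != z) && tree_edge a y) || ((y != a) && tree_edge z y).
Proof.
move=> aR eaz; have [y /andP [eay yz] | a_leaf] := pickP [pred y | e a y && (y != z)].
  by exists y; rewrite yz /tree_edge (root_child aR eay).1 orbT.
have {}a_leaf y : e a y -> y = z by move=> eay; move: (a_leaf y); rewrite /= eay => /negbFE /eqP.
have [y ezy ya] := exists_other_neighbour e_sym comp3 eaz a_leaf.
by exists y; rewrite ya /tree_edge (child_of_leaf_root aR eaz a_leaf ezy ya) !orbT.
Qed.

Lemma tree_edge_beside u v : e u v ->
  exists y, ((y != v) && tree_edge u y) || ((y != u) && tree_edge v y).
Proof.
move=> euv; have [uR | uR] := boolP (u \in forest_roots); first exact: tree_edge_beside_root.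
have [vu | vu] := eqVneq (parent u) v; last first.
  by exists (parent u); rewrite vu /tree_edge /child uR eqxx.
have [vR | vR] := boolP (v \in forest_roots).
  have evu : e v u by rewrite e_sym.
  by have [y y_ok] := tree_edge_beside_root vR evu; exists y; rewrite orbC.
have uv : child u v by rewrite /child uR vu eqxx.
exists (parent v); apply/orP; right; rewrite /tree_edge /child vR eqxx /= andbT.
apply: contraTneq (child_dist uv) => pvu.
have vu' : child v u by rewrite /child vR pvu eqxx.
by rewrite -leqNgt ltnW // child_dist.
Qed.

Lemma deg_le_max v : (deg e v <= max_deg e)%N.
Proof. exact: (leq_bigmax (F := deg e)). Qed.

Lemma one_lt_col v : (1 < col)%N.
Proof.
have [y ecy] := exists_neighbour e_sym (root_of v) comp3.
apply: leq_trans (forest_roots_deg (root_of_in_forest_roots v)); rewrite ltnS.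
by apply/card_gt0P; exists y; rewrite inE.
Qed.

Variable M : zmodType.
Hypothesis ordM : order_at_least M (max_deg e + col + 1).

Lemma exists_nonzero (v : T) : exists g0 : M, g0 != 0.
Proof.
have [g0] : exists g0 : M, g0 \notin [:: 0].
  by apply: fresh_of_order ordM _; have := one_lt_col v; rewrite /=; lia.
by rewrite inE; exists g0.
Qed.

(* [P] is the set of processed vertices: the forest edge from [u] to its
   parent gets its label when [u] is processed. *)
Definition pending (P : {set T}) u v := (u \notin P) && child u v.

Definition labelled P u v := [&& e u v, ~~ pending P u v & ~~ pending P v u].

Record partial_solution P (f : T -> T -> M) : Prop := PartialSolution {
  ps_children : forall z w, z \in P -> child w z -> w \in P;
  ps_sym : forall u v, f u v = f v u;
  ps_labelled : forall u v, (f u v != 0) = labelled P u v;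
  ps_admissible : admissible e f }.

Lemma labelled_sym P u v : labelled P u v = labelled P v u.
Proof. by rewrite /labelled e_sym [(~~ _) && _]andbC. Qed.

Lemma pending_setU1 P z u v :
  ~~ ((u == z) && (v == parent z)) -> pending (z |: P) u v = pending P u v.
Proof.
rewrite /pending in_setU1 negb_or; have [-> /= zv | //] := eqVneq u z.
by rewrite /child eq_sym (negbTE zv) !andbF.
Qed.

Lemma labelled_setU1 P z u v :
  ~~ ((u == z) && (v == parent z)) -> ~~ ((v == z) && (u == parent z)) ->
  labelled (z |: P) u v = labelled P u v.
Proof. by move=> uv vu; rewrite /labelled !pending_setU1. Qed.

Lemma labelled_setU1_parent P z : z \notin forest_roots -> labelled (z |: P) z (parent z).
Proof.
move=> zR; have zp : child z (parent z) by rewrite /child zR eqxx.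
rewrite /labelled (child_adj zp) /pending setU11 /=; apply/nandP; right.
by apply: contraTN (child_dist zp) => /child_dist /ltnW; rewrite leqNgt.
Qed.

Definition initial_labelling (g0 : M) u v := if e u v && ~~ tree_edge u v then g0 else 0.

Lemma saturated_off_initial g0 w X y :
  saturated_off e (initial_labelling g0) w X -> tree_edge w y -> y \in X.
Proof.
move=> /forallP /(_ y) sat wy; move: sat; rewrite (tree_edge_adj wy) /initial_labelling wy.
by rewrite andbF eqxx orbF.
Qed.

Lemma partial_solution0 g0 : g0 != 0 -> partial_solution set0 (initial_labelling g0).
Proof.
move=> g0_0; split=> [z w | u v | u v | ].
- by rewrite inE.
- by rewrite /initial_labelling e_sym /tree_edge orbC.
- have -> : labelled set0 u v = e u v && ~~ tree_edge u v.
    by rewrite /labelled /pending /tree_edge !inE negb_or andbA.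
  by rewrite /initial_labelling; case: ifP; rewrite ?eqxx.
split=> [w sat | u v euv sat_u sat_v].
  by have [y /(saturated_off_initial sat)] := exists_tree_edge w.
have [y /orP [/andP [yv uy] | /andP [yu vy]]] := tree_edge_beside euv.
  by have := saturated_off_initial sat_u uy; rewrite inE (negbTE yv).
by have := saturated_off_initial sat_v vy; rewrite inE (negbTE yu).
Qed.

Lemma partial_solution_step P f z :
  partial_solution P f -> z \notin forest_roots -> z \notin P ->
  (forall w, child w z -> w \in P) ->
  exists f', partial_solution (z |: P) f'.
Proof.
move=> [P_children f_sym f_lab f_adm] zR zP z_done; set p := parent z.
have zp : child z p by rewrite /child zR eqxx.
have ezp := child_adj zp.
have pP : p \notin P by apply: contra zP => pP; apply: P_children pP zp.
have fzp : f z p = 0.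
  by apply/eqP; rewrite -[_ == 0]negbK f_lab /labelled /pending zP zp andbF.
have cost_z : (cost e f z p <= max_deg e)%N := leq_trans (cost_le_deg f ezp) (deg_le_max z).
(* Only a root can become saturated together with [z]. *)
have cost_p : (cost e f p z < col)%N.
  rewrite /cost; case: ifP => [/forallP sat | _]; last exact: one_lt_col z.
  apply: forest_roots_deg; apply: contraT => pR.
  have pq : child p (parent p) by rewrite /child pR eqxx.
  have qz : parent p != z.
    by apply: contraTneq (child_dist zp) => qz; rewrite -leqNgt ltnW // -qz child_dist.
  move: (sat (parent p)); rewrite (child_adj pq) inE (negbTE qz) f_lab /labelled /pending.
  by rewrite pP pq andbF.
have [x x0 adm_x] : exists2 x, x != 0 & admissible e (set_edge f z p x).
  apply: (admissible_set_edge e_sym e_irr ordM f_adm ezp fzp); first by rewrite f_sym.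
  lia.
exists (set_edge f z p x); split=> // [y w | | u v].
- rewrite in_setU1 => /orP [/eqP -> /z_done | /P_children h /h] wP; by rewrite in_setU1 wP orbT.
- exact: set_edge_sym.
rewrite /set_edge; case: ifP => [/orP [] /andP [/eqP -> /eqP ->] | /negbT].
- by rewrite x0 labelled_setU1_parent.
- by rewrite x0 labelled_sym labelled_setU1_parent.
rewrite negb_or => /andP [uv vu]; rewrite f_lab labelled_setU1 //.
by rewrite andbC.
Qed.

Lemma partial_solution_complete P f : partial_solution P f ->
  exists P' f', partial_solution P' f' /\ forall z, z \notin forest_roots -> z \in P'.
Proof.
have [n] := ubnP #|[set z | (z \notin forest_roots) && (z \notin P)]|.
elim: n P f => // n IH P f; set A := [set z | _] => lt_A_n sol.
have [A0 | [z0 z0A]] := set_0Vmem A.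
  exists P, f; split=> // z zR; apply: contraT => zP.
  have : z \in A by rewrite inE zR zP.
  by rewrite A0 inE.
have [z zA z_max] := arg_maxnP dist z0A; move: (zA : z \in A); rewrite inE => /andP [zR zP].
have z_done w : child w z -> w \in P.
  move=> wz; apply: contraT => wP; have /andP [wR _] := wz.
  have wA : w \in A by rewrite inE wR wP.
  by have := z_max w wA; rewrite /= leqNgt child_dist.
have [f' sol'] := partial_solution_step sol zR zP z_done.
apply: (IH (z |: P) f') => //; rewrite (cardsD1 z) (zA : z \in A) add1n ltnS in lt_A_n.
suff -> : [set w | (w \notin forest_roots) && (w \notin z |: P)] = A :\ z by [].
by apply/setP => w; rewrite !inE negb_or andbCA.
Qed.

Definition proper_labelling (f : T -> T -> M) :=
  [/\ (forall u v, e u v -> f u v = f v u),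
      (forall u v, e u v -> f u v <> 0),
      (forall v, wsum e f v <> 0) &
      (forall u v, e u v -> wsum e f u <> wsum e f v)].

Lemma complete_solution P f : partial_solution P f ->
  (forall z, z \notin forest_roots -> z \in P) -> proper_labelling f.
Proof.
move=> [_ f_sym f_lab [adm_w adm_uv]] all_P.
have f_neq0 u v : (f u v != 0) = e u v.
  have no_pending a b : ~~ pending P a b.
    by rewrite /pending; case: (boolP (child a b)) => [/andP [/all_P ->] | _]; rewrite ?andbF.
  by rewrite f_lab /labelled !no_pending !andbT.
have sat w X : saturated_off e f w X.
  by apply/forallP => y; apply/implyP; rewrite -f_neq0 => ->; rewrite orbT.
split=> [u v _ | u v | v | u v euv]; first exact: f_sym.
- by rewrite -f_neq0 => /eqP.
- by apply/eqP/adm_w.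
- by apply/eqP/adm_uv.
Qed.

Lemma exists_proper_labelling : exists f, proper_labelling f.
Proof.
have [v _ | T0] := pickP (@predT T); last by exists (fun _ _ => 0); split=> u; have := T0 u.
have [g0 g0_0] := exists_nonzero v.
have [P [f [sol all_P]]] := partial_solution_complete (partial_solution0 g0_0).
by exists f; apply: complete_solution sol all_P.
Qed.

End Construction.

Theorem mainTheorem6 (T : finType) (e : rel T) (M : zmodType) (col : nat) :
  simple_graph e ->
  components_at_least3 e ->
  is_coloring_number e col ->
  order_at_least M (max_deg e + col + 1) ->
  exists f : T -> T -> M,
    [/\ (forall u v, e u v -> f u v = f v u),
        (forall u v, e u v -> f u v <> 0%R),
        (forall v, wsum e f v <> 0%R) &
        (forall u v, e u v -> wsum e f u <> wsum e f v)].
Proof.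
move=> [e_sym e_irr] comp3 [colb _] ordM.
exact: (exists_proper_labelling e_sym e_irr comp3 colb ordM).
Qed.
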